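(* Let $Z\in\Theta_2(r_0,s_0)$ and let $r_1<r_2<r_0$, $s_1<s_2<s_0$. Then for any $Y\in\Theta_2(r_1,s_1)$, $$\|P_{\Theta_2(r_2,s_2)}(Z)-Z\|_{\rm F}\le(\alpha+\beta+\alpha\beta)\,\|Y-Z\|_{\rm F},$$ where $\alpha=\sqrt{(s_0-s_2)/(s_0-s_1)}$ and $\beta=\sqrt{(r_0-r_2)/(r_0-r_1)}$.
   Context: For $A\in\mathbb{R}^{d_1\times d_2\times d_3}$, its slices are $A_{\cdot\cdot j_3}=(A_{j_1j_2j_3})_{j_1,j_2}\in\mathbb{R}^{d_1\times d_2}$, $1\le j_3\le d_3$; $\|\cdot\|_{\rm F}$ is the Frobenius norm. $\Theta_2(r,s)=\{A\in\mathbb{R}^{d_1\times d_2\times d_3}: \max_{j_3}\mathrm{rank}(A_{\cdot\cdot j_3})\le r,\ \sum_{j_3}\mathbb{1}(A_{\cdot\cdot j_3}\ne0)\le s\}$. $P_{\Theta_2(r,s)}(A)$ is defined in two steps: (1) replace each slice $A_{\cdot\cdot j_3}$ by its best rank-$r$ Frobenius-norm approximation $\tilde A_{\cdot\cdot j_3}$; (2) keep the $s$ slices with the largest $\|\tilde A_{\cdot\cdot j_3}\|_{\rm F}$ and set all other slices to zero. *)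

From mathcomp Require Import all_boot all_order all_algebra.
From mathcomp Require Import reals.
Set Implicit Arguments. Unset Strict Implicit. Unset Printing Implicit Defensive.
Import Order.TTheory GRing.Theory Num.Theory.
Local Open Scope ring_scope.

(* A tensor A in R^{d1 x d2 x d3} is represented by its family of slices
   A j3 = A_{..j3} : 'M[R]_(d1,d2), j3 : 'I_d3.  Entry A_{j1 j2 j3} = A j3 j1 j2. *)
Definition tensor (R : Type) (d1 d2 d3 : nat) := 'I_d3 -> 'M[R]_(d1, d2).

Section Defs.
Variables (R : realType) (d1 d2 d3 : nat).

Definition mxfrob (M : 'M[R]_(d1, d2)) : R :=
  Num.sqrt (\sum_(i < d1) \sum_(j < d2) M i j ^+ 2).

Definition tfrob (A : tensor R d1 d2 d3) : R :=
  Num.sqrt (\sum_(k < d3) \sum_(i < d1) \sum_(j < d2) A k i j ^+ 2).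

Definition tsub (A B : tensor R d1 d2 d3) : tensor R d1 d2 d3 :=
  fun k => A k - B k.

Definition Theta2 (r s : nat) (A : tensor R d1 d2 d3) : Prop :=
  (forall k, (\rank (A k) <= r)%N) /\ (#|[set k | A k != 0%R]| <= s)%N.

Definition best_rank_approx (r : nat) (M B : 'M[R]_(d1, d2)) : Prop :=
  (\rank B <= r)%N /\
  forall C : 'M[R]_(d1, d2), (\rank C <= r)%N -> mxfrob (M - B) <= mxfrob (M - C).

(* W is a (possible) value of P_{Theta_2(r,s)}(A): step (1) replaces each slice
   by a best rank-r approximation At k; step (2) keeps s slices with the largest
   Frobenius norms of At (all slices if s >= d3) and zeroes the others.
   Ties in either step may be resolved arbitrarily. *)
Definition is_proj_Theta2 (r s : nat) (A W : tensor R d1 d2 d3) : Prop :=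
  exists (At : tensor R d1 d2 d3) (S : {set 'I_d3}),
    (forall k, best_rank_approx r (A k) (At k)) /\
    #|S| = minn s d3 /\
    (forall j k, j \in S -> k \notin S -> mxfrob (At k) <= mxfrob (At j)) /\
    (forall k, W k = if k \in S then At k else 0%R).

End Defs.

(* Slice by slice: let l_1, ..., l_n >= 0 be the eigenvalues of Z^T Z, at most
   r0 of them nonzero.  Projecting Z onto the eigenvectors of the r2 largest l_i
   shows that a best rank-r2 approximation errs (in squared norm) by at most the
   sum of the remaining l_i.  For Y of rank <= r1, splitting Z - Y along the
   orthogonal projection onto the row space of Y gives
   |Z - Y|^2 >= sum_i l_i (1 - w_i), where w_i in [0, 1] are the diagonal entries
   of that projection in an orthonormal eigenbasis, so sum_i w_i <= r1.  An
   averaging argument then bounds the tail sum by (r0 - r2)/(r0 - r1) times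
   sum_i l_i (1 - w_i).  The same averaging, applied to the squared norms of the
   truncated slices with w_k = [Y_k <> 0], controls the selection of s2 slices,
   and two triangle inequalities combine the factors beta and alpha. *)

From mathcomp Require Import all_boot all_order all_algebra.
From mathcomp Require Import reals.
From mathcomp Require Import complex spectral.
From mathcomp Require Import ring lra.
Import Order.TTheory GRing.Theory Num.Theory.
Local Open Scope ring_scope.
Local Open Scope sesquilinear_scope.
Set Implicit Arguments. Unset Strict Implicit. Unset Printing Implicit Defensive.

Section SquaredFrobenius.
Variable R : realDomainType.

Definition sqfrob m n (M : 'M[R]_(m, n)) : R := \sum_i \sum_j M i j ^+ 2.

Lemma sqfrob_trace m n (M : 'M[R]_(m, n)) : sqfrob M = \tr (M *m M^T).
Proof.
rewrite /sqfrob /mxtrace; apply: eq_bigr => i _; rewrite !mxE.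
by apply: eq_bigr => j _; rewrite !mxE expr2.
Qed.

Lemma sqfrob_ge0 m n (M : 'M[R]_(m, n)) : 0 <= sqfrob M.
Proof. by apply: sumr_ge0 => i _; apply: sumr_ge0 => j _; apply: sqr_ge0. Qed.

Lemma sqfrob_eq0 m n (M : 'M[R]_(m, n)) : (sqfrob M == 0) = (M == 0).
Proof.
apply/eqP/eqP => [|->]; last first.
  by rewrite /sqfrob big1 // => i _; rewrite big1 // => j _; rewrite mxE expr0n.
move/eqP; rewrite psumr_eq0 => [/allP M0|i _]; last by apply: sumr_ge0 => j _; apply: sqr_ge0.
apply/matrixP => i j; move/(_ i (mem_index_enum i)): M0.
rewrite psumr_eq0 => [/allP/(_ j (mem_index_enum j))|k _]; last exact: sqr_ge0.
by rewrite sqrf_eq0 mxE => /eqP.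
Qed.

Lemma sqfrobN m n (M : 'M[R]_(m, n)) : sqfrob (- M) = sqfrob M.
Proof. by apply: eq_bigr => i _; apply: eq_bigr => j _; rewrite mxE sqrrN. Qed.

Lemma sqfrob_subC m n (M N : 'M[R]_(m, n)) : sqfrob (M - N) = sqfrob (N - M).
Proof. by rewrite -sqfrobN opprB. Qed.

End SquaredFrobenius.

Lemma mxtrace_diag_mul (R : pzSemiRingType) n (d : 'rV[R]_n) (A : 'M[R]_n) :
  \tr (diag_mx d *m A) = \sum_i d 0 i * A i i.
Proof. by rewrite mul_diag_mx /mxtrace; apply: eq_bigr => i _; rewrite mxE. Qed.

Section RowSubmatrices.
Variable F : fieldType.

Lemma row_free_rowsub1 k n (f : 'I_k -> 'I_n) :
  injective f -> row_free (rowsub f (1%:M : 'M[F]_n)).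
Proof.
move=> f_inj; have id_k : rowsub f 1%:M *m (rowsub f (1%:M : 'M[F]_n))^T = 1%:M.
  apply/matrixP => a c; rewrite !mxE (bigD1 (f a)) //= big1 ?addr0 => [|b fab].
    by rewrite !mxE eqxx mul1r (inj_eq f_inj) eq_sym.
  by rewrite !mxE eq_sym (negbTE fab) mul0r.
rewrite /row_free eqn_leq rank_leq_row -{1}(mxrank1 F k) -id_k.
exact: mxrankM_maxl.
Qed.

Lemma row_free_rowsub_unit k n (f : 'I_k -> 'I_n) (Q : 'M[F]_n) :
  injective f -> Q \in unitmx -> row_free (rowsub f Q).
Proof.
move=> f_inj Qu; rewrite /row_free rowsubE mxrankMfree ?row_free_unit //.
exact: row_free_rowsub1.
Qed.

Lemma card_support_le_rank_diag n (l : 'rV[F]_n) :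
  (#|[set i | l 0%R i != 0%R]| <= \rank (diag_mx l))%N.
Proof.
set S := [set i | l 0%R i != 0%R]; pose f := @enum_val _ (mem S).
have f_inj : injective f by apply: enum_val_inj.
pose lS := \row_a l 0 (f a).
have lS_unit : diag_mx lS \in unitmx.
  rewrite unitmxE det_diag unitfE prodf_seq_neq0; apply/allP => a _ /=.
  by have := enum_valP a; rewrite inE mxE.
have rank_sub : \rank (rowsub f (diag_mx l)) = #|S|.
  have -> : rowsub f (diag_mx l) = diag_mx lS *m rowsub f 1%:M.
    by apply/matrixP => a j; rewrite mul_diag_mx !mxE mulr_natr.
  by rewrite mxrankMfree ?row_free_rowsub1 // mxrank_unit.
by rewrite -rank_sub rowsubE mxrankM_maxr.
Qed.

End RowSubmatrices.

Section RowProjection.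
Variable F : realFieldType.

Definition rowproj k n (A : 'M[F]_(k, n)) : 'M_n :=
  A^T *m invmx (A *m A^T) *m A.

Lemma sqfrob_mul_proj m n (M : 'M[F]_(m, n)) (P : 'M[F]_n) :
  P^T = P -> P *m P = P -> sqfrob (M *m P) = \tr (M^T *m M *m P).
Proof.
move=> PT PP; rewrite sqfrob_trace trmx_mul PT mulmxA -(mulmxA M) PP.
by rewrite mxtrace_mulC mulmxA.
Qed.

Variables (k n : nat) (A : 'M[F]_(k, n)).
Hypothesis A_free : row_free A.

Lemma gram_unitmx : A *m A^T \in unitmx.
Proof.
rewrite -row_free_unit -kermx_eq0 -(mulmx_free_eq0 _ A_free) -sqfrob_eq0.
by rewrite sqfrob_trace trmx_mul mulmxA -(mulmxA _ A) mulmx_ker mul0mx mxtrace0.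
Qed.

Lemma rowprojT : (rowproj A)^T = rowproj A.
Proof. by rewrite /rowproj !trmx_mul trmxK trmx_inv trmx_mul trmxK mulmxA. Qed.

Lemma mul_rowproj : A *m rowproj A = A.
Proof. by rewrite /rowproj !mulmxA mulmxV ?gram_unitmx ?mul1mx. Qed.

Lemma rowproj_idem : rowproj A *m rowproj A = rowproj A.
Proof. by rewrite {1}/rowproj -mulmxA mul_rowproj. Qed.

Lemma rank_rowproj : (\rank (rowproj A) <= k)%N.
Proof. exact: leq_trans (mxrankM_maxr _ _) (rank_leq_row A). Qed.

Lemma mxtrace_mul_rowproj (G : 'M[F]_n) (d : 'rV[F]_k) :
  A *m G = diag_mx d *m A -> \tr (G *m rowproj A) = \sum_i d 0 i.
Proof.
move=> AG; rewrite /rowproj !mulmxA mxtrace_mulC !mulmxA AG.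
by rewrite -(mulmxA _ A) mulmxK ?gram_unitmx // mxtrace_diag.
Qed.

Lemma sqfrob_mul_rowprojC m (M : 'M[F]_(m, n)) :
  sqfrob (M - M *m rowproj A) = \tr (M^T *m M) - \tr (M^T *m M *m rowproj A).
Proof.
have PT : (1%:M - rowproj A)^T = 1%:M - rowproj A by rewrite linearB /= trmx1 rowprojT.
have PP : (1%:M - rowproj A) *m (1%:M - rowproj A) = 1%:M - rowproj A.
  by rewrite mulmxBr mulmx1 mulmxBl mul1mx rowproj_idem subrr subr0.
rewrite -{1}(mulmx1 M) -mulmxBr sqfrob_mul_proj //.
by rewrite mulmxBr mulmx1 linearB.
Qed.

End RowProjection.

Lemma eigen_truncation (F : realFieldType) m n (Z : 'M[F]_(m, n)) (Q : 'M[F]_n)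
    (l : 'rV[F]_n) (T : {set 'I_n}) :
  Q \in unitmx -> Q *m (Z^T *m Z) = diag_mx l *m Q ->
  exists2 C : 'M[F]_(m, n), (\rank C <= #|T|)%N &
    sqfrob (Z - C) = \sum_(i | i \notin T) l 0 i.
Proof.
move=> Qu QG; pose f := @enum_val _ (mem T).
have A_free : row_free (rowsub f Q) by apply: row_free_rowsub_unit => //; apply: enum_val_inj.
exists (Z *m rowproj (rowsub f Q)).
  exact: leq_trans (mxrankM_maxr _ _) (rank_rowproj _).
rewrite sqfrob_mul_rowprojC //.
rewrite (mxtrace_mul_rowproj A_free (d := \row_a l 0 (f a))); last first.
  by rewrite mul_rowsub_mx QG !mul_diag_mx; apply/matrixP => a j; rewrite !mxE.
have -> : Z^T *m Z = invmx Q *m diag_mx l *m Q by rewrite -mulmxA -QG mulKmx.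
rewrite mxtrace_mulC mulmxA mulmxV // mul1mx mxtrace_diag.
have -> : \sum_a (\row_a l 0 (f a)) 0 a = \sum_(i in T) l 0 i.
  by rewrite [RHS]big_enum_val; apply: eq_bigr => a _; rewrite mxE.
by rewrite (bigID (mem T)) /= addrC addrK.
Qed.

Section TailBound.
Variables (R : realFieldType) (I : finType).

Lemma exists_top_set (a : I -> R) k : (k <= #|I|)%N ->
  exists T : {set I}, #|T| = k /\ forall j i, j \in T -> i \notin T -> a i <= a j.
Proof.
elim: k => [_|k IHk lt_k]; first by exists set0; rewrite cards0; split=> // j i; rewrite inE.
have [T [cardT topT]] := IHk (ltnW lt_k).
have [x0 x0T] : exists x0, x0 \in ~: T.
  by apply/card_gt0P; rewrite cardsCs setCK cardT subn_gt0.
have [x xT xmax] := arg_maxP a x0T.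
have {}xT : x \notin T by rewrite -in_setC; exact: xT.
exists (x |: T); split; first by rewrite cardsU1 xT cardT.
move=> j i; rewrite !inE negb_or => /predU1P[->|jT] /andP[_ iT].
  by apply: xmax; move: iT; rewrite -in_setC.
exact: topT.
Qed.

Variables (a : I -> R) (T : {set I}) (t : R).
Hypothesis t_ge0 : 0 <= t.
Hypotheses (ge_t : forall j, j \in T -> t <= a j) (le_t : forall i, i \notin T -> a i <= t).

Lemma sum_notin_le_threshold p : (#|[set i | a i != 0%R]| <= p)%N ->
  \sum_(i | i \notin T) a i <= t * (p - #|T|)%:R.
Proof.
move=> supp_le; set N := [set i | a i != 0].
have -> : \sum_(i | i \notin T) a i = \sum_(i in N :\: T) a i.
  rewrite [RHS]big_mkcond [LHS]big_mkcond; apply: eq_bigr => i _.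
  by rewrite !inE; case: (i \in T); case: eqP.
apply: le_trans (_ : \sum_(i in N :\: T) t <= _).
  by apply: ler_sum => i; rewrite inE => /andP[/le_t].
rewrite sumr_const -[_ *+ _]mulr_natr; have [->|t_gt0] := eqVneq t 0; first by rewrite !mul0r.
apply: (ler_wpM2l t_ge0); rewrite ler_nat cardsD; apply: leq_sub supp_le _.
rewrite (setIidPr _) //; apply/subsetP => j jT; rewrite inE.
by apply: contra_neq t_gt0 => aj0; apply/eqP; rewrite eq_le t_ge0 andbT -aj0 ge_t.
Qed.

Lemma sum_notin_add_le_weighted (w : I -> R) (s : R) :
  (forall i, 0 <= w i <= 1) -> \sum_i w i <= s ->
  \sum_(i | i \notin T) a i + t * (#|T|%:R - s) <= \sum_i a i * (1 - w i).
Proof.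
move=> w01 sum_w.
have termwise i : t * (i \in T)%:R - t * w i + (i \notin T)%:R * a i <= a i * (1 - w i).
  have /andP[w0 w1] := w01 i; case: (boolP (i \in T)) => [iT|iT] /=.
    rewrite mulr1n mulr1 mul0r addr0 -{1}(mulr1 t) -mulrBr.
    by apply: ler_wpM2r; rewrite ?subr_ge0 ?ge_t.
  rewrite mulr0n mulr0 sub0r mul1r mulrBr mulr1 addrC lerD2l lerN2.
  by apply: ler_wpM2r; rewrite ?le_t.
apply: le_trans (ler_sum _ (fun i _ => termwise i)).
rewrite !big_split /= sumrN -!mulr_sumr.
have -> : \sum_i ((i \in T)%:R : R) = #|T|%:R.
  by rewrite -sum1_card natr_sum [RHS]big_mkcond; apply: eq_bigr => i _; case: (i \in T).
have -> : \sum_i (i \notin T)%:R * a i = \sum_(i | i \notin T) a i.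
  by rewrite [RHS]big_mkcond; apply: eq_bigr => i _; case: (i \in T); rewrite ?mul1r ?mul0r.
have : t * \sum_i w i <= t * s by apply: ler_wpM2l.
rewrite mulrBr; lra.
Qed.
End TailBound.

Lemma tail_sum_le (R : realFieldType) (I : finType) (a w : I -> R) (p0 p1 p2 : nat)
    (T : {set I}) :
  (p1 < p2)%N -> (p2 < p0)%N -> (forall i, 0 <= a i) -> (forall i, 0 <= w i <= 1) ->
  \sum_i w i <= p1%:R -> (#|[set i | a i != 0%R]| <= p0)%N -> #|T| = minn p2 #|I| ->
  (forall j i, j \in T -> i \notin T -> a i <= a j) ->
  \sum_(i | i \notin T) a i <=
    (p0%:R - p2%:R) / (p0%:R - p1%:R) * \sum_i a i * (1 - w i).
Proof.
move=> lt12 lt20 a_ge0 w01 sum_w supp_a cardT topT.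
have lt10 := ltn_trans lt12 lt20.
have [le_I|lt_I] := leqP #|I| p2.
  have -> : T = setT by apply/eqP; rewrite eqEcard subsetT cardsT /= cardT leq_min le_I leqnn.
  rewrite big1 => [|i]; last by rewrite inE.
  apply: mulr_ge0; first by rewrite divr_ge0 // subr_ge0 ler_nat ltnW.
  by apply: sumr_ge0 => i _; rewrite mulr_ge0 // subr_ge0; case/andP: (w01 i).
have {}cardT : #|T| = p2 by rewrite cardT (minn_idPl (ltnW lt_I)).
have [j0 j0T] : exists j0, j0 \in T by apply/card_gt0P; rewrite cardT (leq_ltn_trans _ lt12).
have [j jT jmin] := arg_minP a j0T.
have ge_t i : i \in T -> a j <= a i by exact: jmin.
have le_t i : i \notin T -> a i <= a j by apply: topT.
have tail := sum_notin_le_threshold (a_ge0 j) ge_t le_t supp_a.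
have weighted := sum_notin_add_le_weighted (a_ge0 j) ge_t le_t w01 sum_w.
rewrite cardT natrB ?(ltnW lt20) // in tail; rewrite cardT in weighted.
rewrite mulrAC ler_pdivlMr ?subr_gt0 ?ltr_nat // -subr_ge0.
set L := \sum_(i | _) _ in tail weighted *; set X := \sum_i _ in weighted *.
suff -> : (p0%:R - p2%:R) * X - L * (p0%:R - p1%:R) =
    (p0%:R - p2%:R) * (X - (L + a j * (p2%:R - p1%:R))) +
    (p2%:R - p1%:R) * (a j * (p0%:R - p2%:R) - L).
  by rewrite addr_ge0 // mulr_ge0 // subr_ge0 // ler_nat ltnW.
by ring.
Qed.

Section HermitianProjection.
Variable C : numClosedFieldType.

Definition sqfrobC m n (X : 'M[C]_(m, n)) : C := \tr (X *m X^t*).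

Lemma sqfrobC_ge0 m n (X : 'M[C]_(m, n)) : 0 <= sqfrobC X.
Proof.
apply: sumr_ge0 => i _; rewrite mxE; apply: sumr_ge0 => j _.
by rewrite !mxE mul_conjC_ge0.
Qed.

Lemma sqfrobC_mulU m n (X : 'M[C]_(m, n)) (U : 'M[C]_n) :
  U \is unitarymx -> sqfrobC (X *m U) = sqfrobC X.
Proof.
move=> /unitarymxP UU; rewrite /sqfrobC trmx_mul map_mxM mulmxA -(mulmxA X).
by rewrite UU mulmx1.
Qed.

Lemma diag_gram_ge0 m n (X : 'M[C]_(m, n)) (l : 'rV[C]_n) :
  X^t* *m X = diag_mx l -> forall i, 0 <= l 0 i.
Proof.
move=> XX i; have /matrixP/(_ i i) := XX; rewrite !mxE eqxx mulr1n => <-.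
by apply: sumr_ge0 => k _; rewrite !mxE mulrC mul_conjC_ge0.
Qed.

Variables (n : nat) (H : 'M[C]_n).
Hypotheses (H_herm : H^t* = H) (H_idem : H *m H = H).

Lemma compl_herm : (1%:M - H)^t* = 1%:M - H.
Proof. by rewrite linearB map_mxB /= trmx1 map_mx1 H_herm. Qed.

Lemma compl_idem : (1%:M - H) *m (1%:M - H) = 1%:M - H.
Proof. by rewrite mulmxBr mulmx1 mulmxBl mul1mx H_idem subrr subr0. Qed.

Lemma sqfrobC_mul_proj m (X : 'M[C]_(m, n)) :
  sqfrobC (X *m H) = \tr (X^t* *m X *m H).
Proof.
rewrite /sqfrobC trmx_mul map_mxM H_herm mulmxA -(mulmxA X) H_idem.
by rewrite mxtrace_mulC mulmxA.
Qed.

Lemma sqfrobC_proj_split m (X : 'M[C]_(m, n)) :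
  sqfrobC X = sqfrobC (X *m H) + sqfrobC (X *m (1%:M - H)).
Proof.
have H_HC : H *m (1%:M - H) = 0 by rewrite mulmxBr mulmx1 H_idem subrr.
have HC_H : (1%:M - H) *m H = 0 by rewrite mulmxBl mul1mx H_idem subrr.
set Y := X *m H; set Z := X *m (1%:M - H).
have -> : sqfrobC X = sqfrobC (Y + Z) by rewrite /Y /Z -mulmxDr addrC subrK mulmx1.
have YZ : Y *m Z^t* = 0.
  by rewrite trmx_mul map_mxM compl_herm mulmxA -(mulmxA X) H_HC mulmx0 mul0mx.
have ZY : Z *m Y^t* = 0.
  by rewrite trmx_mul map_mxM H_herm mulmxA -(mulmxA X) HC_H mulmx0 mul0mx.
rewrite /sqfrobC (_ : (Y + Z)^t* = Y^t* + Z^t*); last first.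
  by rewrite -map_mxD; congr map_mx; apply: linearD.
by rewrite mulmxDl !mulmxDr YZ ZY addr0 add0r mxtraceD.
Qed.

Lemma herm_idem_diag_ge0_le1 i : 0 <= H i i <= 1.
Proof.
have H_conj j k : H j k = (H k j)^* by rewrite -{1}H_herm !mxE.
have Hii : H i i = \sum_j H j i * (H j i)^*.
  by rewrite -{1}H_idem mxE; apply: eq_bigr => j _; rewrite (H_conj i j) mulrC.
have Hii_ge0 : 0 <= H i i by rewrite Hii sumr_ge0 // => j _; apply: mul_conjC_ge0.
have sq_le : H i i * H i i <= H i i * 1.
  rewrite mulr1 -{2}(conj_Creal (ger0_real Hii_ge0)) [in leRHS]Hii (bigD1 i) //=.
  by rewrite lerDl sumr_ge0 // => j _; apply: mul_conjC_ge0.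
rewrite Hii_ge0 /=; have [->|Hii_neq0] := eqVneq (H i i) 0; first exact: ler01.
by rewrite -(ler_pM2l (_ : 0 < H i i)) // lt_def Hii_neq0.
Qed.

End HermitianProjection.

Section OrthogonalProjection.
Variable C : numClosedFieldType.

Definition orthoproj m n (N : 'M[C]_(m, n)) : 'M[C]_n :=
  (schmidt (row_base N))^t* *m schmidt (row_base N).

Variables (m n : nat) (N : 'M[C]_(m, n)).

Let U_unitary : schmidt (row_base N) *m (schmidt (row_base N))^t* = 1%:M.
Proof. exact/unitarymxP/schmidt_unitarymx/rank_leq_col. Qed.

Lemma orthoproj_herm : (orthoproj N)^t* = orthoproj N.
Proof. by rewrite /orthoproj trmx_mul map_mxM trmxCK. Qed.

Lemma orthoproj_idem : orthoproj N *m orthoproj N = orthoproj N.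
Proof. by rewrite /orthoproj mulmxA -(mulmxA _ (schmidt _)) U_unitary mulmx1. Qed.

Lemma mul_orthoproj : N *m orthoproj N = N.
Proof.
have N_sub : (N <= schmidt (row_base N))%MS.
  by rewrite (eqmx_schmidt_free (row_base_free N)) eq_row_base.
rewrite -{1}(mulmxKpV N_sub) /orthoproj mulmxA -(mulmxA _ (schmidt _)) U_unitary.
by rewrite mulmx1 mulmxKpV.
Qed.

Lemma mxtrace_orthoproj : \tr (orthoproj N) = (\rank N)%:R.
Proof. by rewrite /orthoproj mxtrace_mulC U_unitary mxtrace1. Qed.

Lemma sqfrobC_sub_ge (X : 'M[C]_(m, n)) (l : 'rV[C]_n) :
  X^t* *m X = diag_mx l ->
  \sum_i l 0 i * (1 - orthoproj N i i) <= sqfrobC (X - N).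
Proof.
move=> XX; have herm := orthoproj_herm; have idem := orthoproj_idem.
rewrite (sqfrobC_proj_split herm idem) -[leLHS]add0r lerD ?sqfrobC_ge0 //.
rewrite mulmxBl [N *m _]mulmxBr mulmx1 mul_orthoproj subrr subr0.
rewrite sqfrobC_mul_proj ?compl_herm ?compl_idem // XX mulmxBr mulmx1 linearB /=.
rewrite mxtrace_diag mxtrace_diag_mul -sumrB.
by under eq_bigr do rewrite mulrBr mulr1.
Qed.

End OrthogonalProjection.

Section RealGramSpectral.
Variable R : rcfType.
Local Notation cx := (map_mx (real_complex R)).

Lemma conj_cx m n (M : 'M[R]_(m, n)) : (cx M)^t* = cx M^T.
Proof. by apply/matrixP => i j; rewrite !mxE; apply: conjc_real. Qed.

Lemma cx_realmx m n (M : 'M[R]_(m, n)) : cx M \is a realmx.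
Proof. by apply/mxOverP => i j; rewrite mxE complex_real. Qed.

Lemma sqfrobC_cx m n (M : 'M[R]_(m, n)) : sqfrobC (cx M) = ((sqfrob M)%:C)%C.
Proof. by rewrite /sqfrobC conj_cx -map_mxM trace_map_mx sqfrob_trace. Qed.

Lemma real_gram_spectral m n (Z : 'M[R]_(m, n)) :
  exists (l : 'rV[R]_n) (P : 'M[R[i]]_n),
  [/\ P \is unitarymx, (cx Z *m P^t*)^t* *m (cx Z *m P^t*) = diag_mx (cx l)
    & P *m cx (Z^T *m Z) = diag_mx (cx l) *m P].
Proof.
set G := cx (Z^T *m Z); have GE : G = (cx Z)^t* *m cx Z by rewrite conj_cx -map_mxM.
have G_normal : G \is normalmx by apply/normalmxP; rewrite GE trmx_mul map_mxM trmxCK.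
pose P := spectralmx G; pose lc := spectral_diag G.
have P_unitary : P \is unitarymx by apply: spectral_unitarymx.
have PG : P *m G = diag_mx lc *m P.
  by rewrite {1}(orthomx_spectralP G_normal) !mulmxA mulmxV ?spectral_unit ?mul1mx.
have XX : (cx Z *m P^t*)^t* *m (cx Z *m P^t*) = diag_mx lc.
  rewrite trmx_mul map_mxM trmxCK !mulmxA -(mulmxA P) -GE PG -mulmxA.
  by rewrite (unitarymxP P_unitary) mulmx1.
have lc_real : lc = cx (\row_i complex.Re (lc 0 i)).
  by apply/rowP => i; rewrite !mxE RRe_real // ger0_real // (diag_gram_ge0 XX).
by exists (\row_i complex.Re (lc 0 i)), P; rewrite -lc_real.
Qed.

Lemma real_diagonalization n (G : 'M[R]_n) (l : 'rV[R]_n) (P : 'M[R[i]]_n) :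
  P \in unitmx -> P *m cx G = diag_mx (cx l) *m P ->
  exists2 Q : 'M[R]_n, Q \in unitmx & Q *m G = diag_mx l *m Q.
Proof.
move=> P_unit PG.
have [Q' /andP[Q'_real Q'_unit] /(similarP Q'_unit) Q'G] :
    similar_in [predI realmx & unitmx] (cx G) (diag_mx (cx l)).
  apply: real_similar; rewrite -?map_diag_mx ?cx_realmx //.
  by exists P => //; apply/similarP; rewrite // map_diag_mx.
have Q'E : cx (map_mx (@complex.Re R) Q') = Q'.
  by apply/matrixP => i j; rewrite !mxE RRe_real //; apply: (mxOverP Q'_real).
exists (map_mx (@complex.Re R) Q'); first by rewrite -(map_unitmx (real_complex R)) Q'E.
by apply: (map_mx_inj (f := real_complex R)); rewrite !map_mxM map_diag_mx Q'E.
Qed.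

Lemma sqfrob_sub_ge_weighted m n (Z Y : 'M[R]_(m, n)) (P : 'M[R[i]]_n)
    (l : 'rV[R]_n) :
  P \is unitarymx -> (cx Z *m P^t*)^t* *m (cx Z *m P^t*) = diag_mx (cx l) ->
  exists w : 'I_n -> R, [/\ forall i, 0 <= w i <= 1, \sum_i w i <= (\rank Y)%:R
    & \sum_i l 0 i * (1 - w i) <= sqfrob (Z - Y)].
Proof.
move=> P_unitary XX; set N := cx Y *m P^t*.
have H01 := herm_idem_diag_ge0_le1 (orthoproj_herm N) (orthoproj_idem N).
have HE i : orthoproj N i i = (complex.Re (orthoproj N i i))%:C%C.
  by rewrite RRe_real // ger0_real //; case/andP: (H01 i).
have Pt_unitary : P^t* \is unitarymx by rewrite trmxC_unitary.
exists (fun i => complex.Re (orthoproj N i i)); split.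
- by move=> i; rewrite -!lecR -HE; apply: H01.
- rewrite -lecR rmorph_sum /=; under eq_bigr do rewrite -HE.
  rewrite -[\sum_i _]/(\tr (orthoproj N)) mxtrace_orthoproj.
  rewrite mxrankMfree ?mxrank_map ?rmorph_nat //.
  by rewrite row_free_unit unitarymx_unit.
rewrite -lecR -sqfrobC_cx map_mxB -(sqfrobC_mulU _ Pt_unitary) mulmxBl.
apply: le_trans (sqfrobC_sub_ge N XX); rewrite rmorph_sum; apply: ler_sum => i _.
by rewrite [in leRHS]HE [in leRHS]mxE rmorphM rmorphB rmorph1.
Qed.

End RealGramSpectral.

Lemma mxfrobE (R : realType) m n (M : 'M[R]_(m, n)) : mxfrob M = Num.sqrt (sqfrob M).
Proof. by []. Qed.

Lemma best_rank_approx_err (R : realType) m n (r0 r1 r2 : nat) (Z Y B : 'M[R]_(m, n)) :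
  (r1 < r2)%N -> (r2 < r0)%N -> (\rank Z <= r0)%N -> (\rank Y <= r1)%N ->
  best_rank_approx r2 Z B ->
  sqfrob (Z - B) <= (r0%:R - r2%:R) / (r0%:R - r1%:R) * sqfrob (Z - Y).
Proof.
move=> lt12 lt20 rkZ rkY [_ B_best].
have [l [P [P_unitary XX PG]]] := real_gram_spectral Z.
(* An orthonormal eigenbasis is only available over R[i]; the real eigenbasis Q
   is merely invertible, which suffices for the truncation. *)
have [Q Q_unit QG] := real_diagonalization (unitarymx_unit P_unitary) PG.
have l_ge0 i : 0 <= l 0 i by rewrite -ler0c; have := diag_gram_ge0 XX i; rewrite mxE.
have rk_l : (\rank (diag_mx l) <= \rank Z)%N.
  rewrite -(mulmxK Q_unit (diag_mx l)) -QG.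
  apply: leq_trans (mxrankM_maxl _ _) _; apply: leq_trans (mxrankM_maxr _ _) _.
  exact: mxrankM_maxr.
have supp_l := leq_trans (card_support_le_rank_diag l) (leq_trans rk_l rkZ).
have [T [cardT topT]] := exists_top_set (fun i => l 0 i) (geq_minr r2 #|'I_n|).
have [C rkC errC] := eigen_truncation T Q_unit QG.
have [w [w01 sum_w errY]] := sqfrob_sub_ge_weighted Y P_unitary XX.
have rkC' : (\rank C <= r2)%N by rewrite (leq_trans rkC) // cardT geq_minl.
have B_le_C : sqfrob (Z - B) <= sqfrob (Z - C).
  by rewrite -ler_sqrt ?sqfrob_ge0 //; apply: B_best.
apply: le_trans B_le_C _; rewrite errC.
apply: le_trans (tail_sum_le lt12 lt20 l_ge0 w01 _ supp_l cardT topT) _.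
  by apply: le_trans sum_w _; rewrite ler_nat.
by rewrite ler_wpM2l // divr_ge0 // subr_ge0 ler_nat ltnW // (ltn_trans lt12).
Qed.

Section SumOfSquares.
Variable I : finType.

Lemma cauchy_schwarz_sum (R : realFieldType) (x y : I -> R) :
  (\sum_i x i * y i) ^+ 2 <= (\sum_i x i ^+ 2) * (\sum_i y i ^+ 2).
Proof.
set a := \sum_i x i ^+ 2; set b := \sum_i y i ^+ 2; set c := \sum_i x i * y i.
have quad_ge0 t : 0 <= a + 2 * t * c + t ^+ 2 * b.
  have -> : a + 2 * t * c + t ^+ 2 * b = \sum_i (x i + t * y i) ^+ 2.
    rewrite /a /b /c mulr_sumr [t ^+ 2 * _]mulr_sumr -!big_split /=.
    by apply: eq_bigr => i _; ring.
  by apply: sumr_ge0 => i _; apply: sqr_ge0.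
have [b0|b_neq0] := eqVneq b 0.
  have y0 i : y i = 0.
    by apply/eqP; rewrite -sqrf_eq0; apply/eqP/(psumr_eq0P _ b0) => // j _; apply: sqr_ge0.
  by rewrite /c big1 => [|i _]; rewrite ?y0 ?mulr0 // expr0n b0 mulr0.
have b_gt0 : 0 < b by rewrite lt_def b_neq0 sumr_ge0 // => i _; apply: sqr_ge0.
(* evaluate the nonnegative quadratic at its minimizer t = - c / b *)
have := quad_ge0 (- c / b).
have -> : a + 2 * (- c / b) * c + (- c / b) ^+ 2 * b = a - c ^+ 2 / b by field.
by rewrite subr_ge0 ler_pdivrMr.
Qed.

Lemma minkowski_sum (R : rcfType) (x y : I -> R) :
  Num.sqrt (\sum_i (x i + y i) ^+ 2) <=
  Num.sqrt (\sum_i x i ^+ 2) + Num.sqrt (\sum_i y i ^+ 2).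
Proof.
set a := \sum_i x i ^+ 2; set b := \sum_i y i ^+ 2; set c := \sum_i x i * y i.
have a_ge0 : 0 <= a by apply: sumr_ge0 => i _; apply: sqr_ge0.
have b_ge0 : 0 <= b by apply: sumr_ge0 => i _; apply: sqr_ge0.
have -> : \sum_i (x i + y i) ^+ 2 = a + 2 * c + b.
  rewrite /a /b /c mulr_sumr -!big_split /=.
  by apply: eq_bigr => i _; ring.
have c_le : c <= Num.sqrt a * Num.sqrt b.
  rewrite -sqrtrM //; have [c_le0|c_gt0] := leP c 0.
    by apply: le_trans c_le0 _; apply: sqrtr_ge0.
  by rewrite -(ger0_norm (ltW c_gt0)) -sqrtr_sqr ler_sqrt ?mulr_ge0 // cauchy_schwarz_sum.
rewrite -(ger0_norm (addr_ge0 (sqrtr_ge0 a) (sqrtr_ge0 b))) -sqrtr_sqr.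
rewrite ler_sqrt ?sqr_ge0 // sqrrD !sqr_sqrtr // mulr2n; lra.
Qed.

End SumOfSquares.

Section TensorFrobenius.
Variables (R : realType) (d1 d2 d3 : nat).
Implicit Types A B D : tensor R d1 d2 d3.

Lemma tfrobE A : tfrob A = Num.sqrt (\sum_k sqfrob (A k)).
Proof. by []. Qed.

Lemma tfrob_subC A B : tfrob (tsub A B) = tfrob (tsub B A).
Proof. by rewrite !tfrobE; congr Num.sqrt; apply: eq_bigr => k _; apply: sqfrob_subC. Qed.

Lemma tfrob_triangle A B D : tfrob (tsub A B) <= tfrob (tsub A D) + tfrob (tsub D B).
Proof.
have flatten E :
    \sum_k sqfrob (E k) = \sum_(p : 'I_d3 * ('I_d1 * 'I_d2)) E p.1 p.2.1 p.2.2 ^+ 2.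
  transitivity (\sum_k \sum_(q : 'I_d1 * 'I_d2) E k q.1 q.2 ^+ 2).
    by apply: eq_bigr => k _; rewrite /sqfrob pair_big.
  by rewrite pair_big.
have split k : tsub A B k = tsub A D k + tsub D B k by rewrite /tsub addrA subrK.
rewrite !tfrobE !flatten; under eq_bigr do rewrite split mxE.
exact: minkowski_sum.
Qed.

End TensorFrobenius.

Lemma best_rank_approx0 (R : realType) m n r (B : 'M[R]_(m, n)) :
  best_rank_approx r 0 B -> B = 0.
Proof.
case=> _ /(_ 0); rewrite mxrank0 => /(_ isT).
rewrite !mxfrobE subrr sub0r sqfrobN ler_sqrt ?sqfrob_ge0 // => B_le.
apply/eqP; rewrite -sqfrob_eq0 eq_le sqfrob_ge0 andbT (le_trans B_le) //.
by rewrite le_eqVlt sqfrob_eq0 eqxx.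
Qed.

Lemma slicewise_approx_err (R : realType) d1 d2 d3 (r0 r1 r2 : nat)
    (Z Y Zh : tensor R d1 d2 d3) :
  (r1 < r2)%N -> (r2 < r0)%N ->
  (forall k, \rank (Z k) <= r0)%N -> (forall k, \rank (Y k) <= r1)%N ->
  (forall k, best_rank_approx r2 (Z k) (Zh k)) ->
  tfrob (tsub Zh Z) <= Num.sqrt ((r0%:R - r2%:R) / (r0%:R - r1%:R)) * tfrob (tsub Y Z).
Proof.
move=> lt12 lt20 rkZ rkY Zh_best.
have c_ge0 : 0 <= (r0%:R - r2%:R) / (r0%:R - r1%:R) :> R.
  by rewrite divr_ge0 // subr_ge0 ler_nat ltnW // (ltn_trans lt12).
rewrite !tfrobE -sqrtrM // ler_sqrt; last first.
  by rewrite mulr_ge0 // sumr_ge0 // => k _; apply: sqfrob_ge0.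
rewrite mulr_sumr; apply: ler_sum => k _; rewrite /tsub sqfrob_subC (sqfrob_subC (Y k)).
exact: best_rank_approx_err.
Qed.

Lemma slice_selection_err (R : realType) d1 d2 d3 (s0 s1 s2 : nat)
    (Zh Y W : tensor R d1 d2 d3) (S : {set 'I_d3}) :
  (s1 < s2)%N -> (s2 < s0)%N ->
  (#|[set k | Zh k != 0%R]| <= s0)%N -> (#|[set k | Y k != 0%R]| <= s1)%N ->
  #|S| = minn s2 d3 ->
  (forall j k, j \in S -> k \notin S -> mxfrob (Zh k) <= mxfrob (Zh j)) ->
  (forall k, W k = if k \in S then Zh k else 0) ->
  tfrob (tsub W Zh) <= Num.sqrt ((s0%:R - s2%:R) / (s0%:R - s1%:R)) * tfrob (tsub Y Zh).
Proof.
move=> lt12 lt20 suppZh suppY cardS topS defW.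
pose a k := sqfrob (Zh k); pose w k : R := (Y k != 0)%:R.
have c_ge0 : 0 <= (s0%:R - s2%:R) / (s0%:R - s1%:R) :> R.
  by rewrite divr_ge0 // subr_ge0 ler_nat ltnW // (ltn_trans lt12).
have errW : \sum_k sqfrob (tsub W Zh k) = \sum_(k | k \notin S) a k.
  rewrite (bigID (mem S)) /= big1 ?add0r => [|k kS].
    by apply: eq_bigr => k kS; rewrite /tsub defW (negbTE kS) sub0r sqfrobN.
  by apply/eqP; rewrite /tsub defW kS subrr sqfrob_eq0.
have errY : \sum_k a k * (1 - w k) <= \sum_k sqfrob (tsub Y Zh k).
  apply: ler_sum => k _; rewrite /w /tsub; have [->|_] := eqVneq (Y k) 0.
    by rewrite subr0 mulr1 sub0r sqfrobN.
  by rewrite subrr mulr0 sqfrob_ge0.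
have w01 k : 0 <= w k <= 1 by rewrite /w; case: (Y k != 0); rewrite ?lexx ?ler01.
have sum_w : \sum_k w k <= s1%:R.
  rewrite (_ : \sum_k w k = #|[set k | Y k != 0%R]|%:R) ?ler_nat //.
  rewrite -sum1_card natr_sum [RHS]big_mkcond; apply: eq_bigr => k _.
  by rewrite inE /w; case: (Y k != 0).
have supp_a : (#|[set k | a k != 0%R]| <= s0)%N.
  rewrite (_ : [set k | a k != 0] = [set k | Zh k != 0]) //.
  by apply/setP => k; rewrite !inE sqfrob_eq0.
have top_a j k : j \in S -> k \notin S -> a k <= a j.
  by move=> jS kS; rewrite -ler_sqrt ?sqfrob_ge0 //; apply: topS.
have cardS' : #|S| = minn s2 #|'I_d3| by rewrite card_ord.
rewrite !tfrobE -sqrtrM // ler_sqrt; last first.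
  by rewrite mulr_ge0 // sumr_ge0 // => k _; apply: sqfrob_ge0.
rewrite errW; apply: le_trans (tail_sum_le lt12 lt20 _ w01 sum_w supp_a cardS' top_a) _.
  by move=> k; apply: sqfrob_ge0.
exact: ler_wpM2l.
Qed.

Theorem lemma2 (R : realType) (d1 d2 d3 : nat) (r0 r1 r2 s0 s1 s2 : nat)
  (Z Y W : tensor R d1 d2 d3) :
  (r1 < r2)%N -> (r2 < r0)%N -> (s1 < s2)%N -> (s2 < s0)%N ->
  Theta2 r0 s0 Z -> Theta2 r1 s1 Y ->
  is_proj_Theta2 r2 s2 Z W ->
  let alpha := Num.sqrt ((s0%:R - s2%:R) / (s0%:R - s1%:R)) : R in
  let beta := Num.sqrt ((r0%:R - r2%:R) / (r0%:R - r1%:R)) : R in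
  tfrob (tsub W Z) <= (alpha + beta + alpha * beta) * tfrob (tsub Y Z).
Proof.
move=> lt12 lt20 slt12 slt20 [rkZ suppZ] [rkY suppY] [Zh [S [Zh_best [cardS [topS defW]]]]].
cbv zeta; set alpha := Num.sqrt (_ / (s0%:R - s1%:R)).
set beta := Num.sqrt (_ / (r0%:R - r1%:R)).
have suppZh : (#|[set k | Zh k != 0%R]| <= s0)%N.
  apply: leq_trans suppZ; apply: subset_leq_card; apply/subsetP => k; rewrite !inE.
  by apply: contra_neq => Zk0; apply: best_rank_approx0; rewrite -Zk0.
have Zh_err : tfrob (tsub Zh Z) <= beta * tfrob (tsub Y Z).
  exact: slicewise_approx_err lt12 lt20 rkZ rkY Zh_best.
have W_err : tfrob (tsub W Zh) <= alpha * tfrob (tsub Y Zh).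
  exact: slice_selection_err slt12 slt20 suppZh suppY cardS topS defW.
have Y_err : tfrob (tsub Y Zh) <= tfrob (tsub Y Z) + beta * tfrob (tsub Y Z).
  by apply: le_trans (tfrob_triangle Y Zh Z) _; rewrite (tfrob_subC Z) lerD2l.
have := ler_wpM2l (sqrtr_ge0 _ : 0 <= alpha) Y_err.
have := tfrob_triangle W Z Zh.
lra.
Qed.
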